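(* Let $d\ge1$, $p\in\mathcal H(n,d)$, let $P$ be the induced homogeneous polynomial, write $P=S\cdot Q$, and let $K$ be the support of the Newton diagram of $Q$. Then $K$ is connected, contains $(0,\dots,0)$, and has size $d$.
   Context: $s(x)=x_1+\dots+x_n$. $\mathcal H(n,d)$ is the set of $p\in\mathbb R[x_1,\dots,x_n]$ of degree $d$ with all coefficients nonnegative and $p(x)=1$ whenever $s(x)=1$. Writing $p=\sum_{k=0}^dp_k$ with $p_k$ homogeneous of degree $k$, the induced homogeneous polynomial is $P(X_0,\dots,X_n)=\sum_{k=0}^dp_k(X_1,\dots,X_n)(-X_0)^{d-k}-(-X_0)^d$; it vanishes where $S(X)=X_0+X_1+\dots+X_n=0$, so $P=SQ$ with $Q$ homogeneous. The Newton diagram of $Q$ (with $\deg P=d$) is the function $D\colon\mathbb Z^n\to\{0,P,N\}$ assigning to $m$ the value $P$, $0$, or $N$ according as the coefficient of $X_0^{d-1-|m|}X_1^{m_1}\cdots X_n^{m_n}$ in $Q$ is positive, zero (including when some exponent is negative), or negative, where $|m|=m_1+\dots+m_n$; its support is $K=D^{-1}(\{P,N\})$. With $e_1,\dots,e_n$ the standard basis, two distinct points $m,m'$ are adjacent if $m-m'\in\{\pm e_j\}\cup\{e_j-e_k:j\ne k\}$; $K$ is connected if any two points of $K$ are joined by a path of successively adjacent points of $K$. The size of $K$ is $k-|a|+1$ where $k=\max_{m\in K}|m|$ and $a_j=\min_{m\in K}m_j$. *)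

From HB Require Import structures.
From mathcomp Require Import all_boot all_order all_algebra.
Set Implicit Arguments. Unset Strict Implicit. Unset Printing Implicit Defensive.
Import Order.TTheory GRing.Theory Num.Theory.
Local Open Scope ring_scope.

(* Polynomials are represented by their coefficient functions on monomials.
   A monomial in n variables X_0..X_{n-1} is its exponent vector. *)
Definition mono (n : nat) := {ffun 'I_n -> nat}.
Definition mdeg (n : nat) (m : mono n) : nat := (\sum_i m i)%N.

(* Evaluation of a polynomial (coefficients c) all of whose monomials have
   total degree <= d (hence every exponent <= d). *)
Definition meval (R : comNzRingType) (n d : nat) (c : mono n -> R)
    (x : 'I_n -> R) : R :=
  \sum_(m : {ffun 'I_n -> 'I_d.+1})
     c [ffun i => nat_of_ord (m i)] * \prod_(i < n) x i ^+ m i.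

Definition in_H (R : realFieldType) (n d : nat) (c : mono n -> R) : Prop :=
  [/\ (forall m : mono n, (d < mdeg m)%N -> c m = 0),
      (exists m : mono n, mdeg m = d /\ c m != 0),
      (forall m : mono n, 0 <= c m)
    & (forall x : 'I_n -> R, \sum_i x i = 1 -> meval d c x = 1)].

(* Monomials in X_0, X_1..X_n: index ord0 is X_0, lift ord0 i is X_{i+1}. *)
Definition split0 (n : nat) (M : mono n.+1) : mono n :=
  [ffun i => M (lift ord0 i)].

(* Coefficient of X_0^{M_0} X^m in
   P = sum_{k=0}^d p_k(X) (-X_0)^{d-k} - (-X_0)^d. *)
Definition Pcoef (R : realFieldType) (n d : nat) (c : mono n -> R)
    (M : mono n.+1) : R :=
  let m := split0 M in
  if (M ord0 + mdeg m == d)%N then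
    (-1) ^+ (d - mdeg m) * c m - (if mdeg m == 0%N then (-1) ^+ d else 0)
  else 0.

(* Coefficient of S*Q at M, where S = X_0 + ... + X_n. *)
Definition decr (n : nat) (M : mono n) (j : 'I_n) : mono n :=
  [ffun i => if i == j then (M i).-1 else M i].
Definition SQcoef (R : realFieldType) (n : nat) (q : mono n.+1 -> R)
    (M : mono n.+1) : R :=
  \sum_(j < n.+1 | (0 < M j)%N) q (decr M j).

Definition homogeneous (R : realFieldType) (n : nat) (q : mono n -> R)
    (k : nat) : Prop :=
  forall M : mono n, mdeg M != k -> q M = 0.

Definition pt (n : nat) := {ffun 'I_n -> int}.
Definition pdeg (n : nat) (m : pt n) : int := \sum_i m i.

(* The monomial X_0^{d-1-|m|} X^m (meaningful when m >= 0, |m| <= d-1). *)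
Definition Qmono (n d : nat) (m : pt n) : mono n.+1 :=
  [ffun i => match unlift ord0 i with
             | None => (d.-1 - absz (pdeg m))%N
             | Some j => absz (m j) end].

Definition Qcoef_at (R : realFieldType) (n d : nat) (q : mono n.+1 -> R)
    (m : pt n) : R :=
  if [forall i, 0 <= m i] && (pdeg m <= (d.-1)%:Z) then q (Qmono d m) else 0.

Inductive sgn3 := Zero3 | Pos3 | Neg3.

Definition newton (R : realFieldType) (n d : nat) (q : mono n.+1 -> R)
    (m : pt n) : sgn3 :=
  let a := Qcoef_at d q m in
  if 0 < a then Pos3 else if a < 0 then Neg3 else Zero3.

Definition newton_support (R : realFieldType) (n d : nat)
    (q : mono n.+1 -> R) : pred (pt n) :=
  fun m => match newton d q m with Zero3 => false | _ => true end.

Definition evec (n : nat) (j : 'I_n) : pt n := [ffun i => Posz (i == j)].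
Definition pdif (n : nat) (m m' : pt n) : pt n := [ffun i => m i - m' i].

Definition adjacent (n : nat) : rel (pt n) := fun m m' =>
  (m != m') &&
  ([exists j, (pdif m m' == evec j) || (pdif m m' == [ffun i => - evec j i])]
   || [exists j, exists k,
         (j != k) && (pdif m m' == [ffun i => evec j i - evec k i])]).

Definition connected (n : nat) (K : pred (pt n)) : Prop :=
  forall x y, K x -> K y ->
    exists s : seq (pt n), [/\ path (@adjacent n) x s, last x s = y & all K s].

Definition has_size (n : nat) (K : pred (pt n)) (sz : int) : Prop :=
  exists (k : int) (a : pt n),
    [/\ (exists2 m, K m & pdeg m = k),
        (forall m, K m -> pdeg m <= k),
        (forall j, (exists2 m, K m & m j = a j) /\
                   (forall m, K m -> a j <= m j))
      & k - pdeg a + 1 = sz].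

From HB Require Import structures.
From mathcomp Require Import all_boot all_order all_algebra.
From Stdlib Require Import ClassicalEpsilon.
Import Order.TTheory GRing.Theory Num.Theory.
Local Open Scope ring_scope.
Set Implicit Arguments. Unset Strict Implicit. Unset Printing Implicit Defensive.

(* Every point of K has nonnegative coordinates and total degree <= d - 1,
   so it suffices to show that every point of K is joined to the origin by
   a path inside K and that K reaches degree d - 1.

   The key step (support_joined_origin): let G be Q with the monomials of
   the points joined to the origin erased. The monomials of Q contributing
   to a single monomial of S*Q give pairwise adjacent points (adjacent_decr),
   so S*G is the part of P on the monomials it touches (SQcoef_erase), and
   none of these is a pure power of X_0. At the zero (-n, 1, ..., 1) of S
   every such term of P is a nonnegative multiple of a coefficient of p
   (Pcoef_vanish), so this part of P vanishes; thus S*G = 0, and G = 0 since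
   S is not a zero divisor (SQcoef_eq0). The top degree comes from a monomial
   of p of degree d (support_top). *)

Lemma le_mdeg (n : nat) (M : mono n) (i : 'I_n) : (M i <= mdeg M)%N.
Proof. by rewrite /mdeg (bigD1 i) //= leq_addr. Qed.

Lemma mdeg_split0 (n : nat) (M : mono n.+1) :
  mdeg M = (M ord0 + mdeg (split0 M))%N.
Proof.
by rewrite /mdeg big_ord_recl; congr (_ + _)%N; apply: eq_bigr => i _; rewrite ffunE.
Qed.

Definition pt_of (n : nat) (M : mono n.+1) : pt n :=
  [ffun i => Posz (M (lift ord0 i))].

Lemma pdeg_pt_of (n : nat) (M : mono n.+1) :
  pdeg (pt_of M) = Posz (mdeg (split0 M)).
Proof. by rewrite /pdeg /mdeg -natz natr_sum; apply: eq_bigr => i _; rewrite !ffunE natz. Qed.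

Lemma pt_of_decr0 (n : nat) (M : mono n.+1) : pt_of (decr M ord0) = pt_of M.
Proof. by apply/ffunP => i; rewrite !ffunE eq_sym (negbTE (neq_lift _ _)). Qed.

Lemma newton_supportE (R : realFieldType) (n d : nat) (q : mono n.+1 -> R)
    (m : pt n) :
  newton_support d q m = (Qcoef_at d q m != 0).
Proof.
rewrite /newton_support /newton.
case: ifP => [pos|npos]; first by rewrite gt_eqF.
case: ifP => [neg|nneg]; first by rewrite lt_eqF.
by case: ltgtP npos nneg.
Qed.

Lemma Qmono_pt_of (n d : nat) (M : mono n.+1) :
  mdeg M = d.-1 -> Qmono d (pt_of M) = M.
Proof.
move=> hM; apply/ffunP => i; rewrite ffunE.
case: unliftP => [j ->|->]; first by rewrite ffunE.
by rewrite pdeg_pt_of /= -hM mdeg_split0 addnK.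
Qed.

Lemma newton_supportP (R : realFieldType) (n d : nat) (q : mono n.+1 -> R)
    (m : pt n) :
  newton_support d q m ->
  [/\ forall i, 0 <= m i, pdeg m <= (d.-1)%:Z, q (Qmono d m) != 0
    & pt_of (Qmono d m) = m].
Proof.
rewrite newton_supportE /Qcoef_at.
case: ifP => [/andP [/forallP m_ge0 m_le] qm|]; last by rewrite eqxx.
split=> //; apply/ffunP => i; rewrite !ffunE liftK /=.
by have := m_ge0 i; case: (m i).
Qed.

Lemma mdeg_homogeneous (R : realFieldType) (n d : nat) (q : mono n.+1 -> R)
    (M : mono n.+1) :
  homogeneous q d.-1 -> q M != 0 -> mdeg M = d.-1.
Proof. by move=> hom qM; apply/eqP; apply: contraNT qM => /hom ->. Qed.

Lemma newton_support_pt_of (R : realFieldType) (n d : nat)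
    (q : mono n.+1 -> R) (M : mono n.+1) :
  homogeneous q d.-1 -> q M != 0 -> newton_support d q (pt_of M).
Proof.
move=> hom qM; have hM := mdeg_homogeneous hom qM.
have M_in_range : [forall i, 0 <= pt_of M i] && (pdeg (pt_of M) <= (d.-1)%:Z).
  apply/andP; split; first by apply/forallP => i; rewrite ffunE.
  by rewrite pdeg_pt_of -hM mdeg_split0 lez_nat leq_addl.
by rewrite newton_supportE /Qcoef_at M_in_range Qmono_pt_of.
Qed.

Lemma pdif_sym (n : nat) (m m' : pt n) : pdif m' m = [ffun i => - pdif m m' i].
Proof. by apply/ffunP => i; rewrite !ffunE opprB. Qed.

Lemma adjacent_sym (n : nat) (m m' : pt n) : adjacent m m' -> adjacent m' m.
Proof.
case/andP=> ne /orP [/existsP [j /orP [/eqP h|/eqP h]]|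
                    /existsP [j /existsP [k /andP [jk /eqP h]]]];
  rewrite /adjacent eq_sym ne /= pdif_sym h.
- apply/orP; left; apply/existsP; exists j; apply/orP; right.
  by apply/eqP/ffunP => i; rewrite !ffunE.
- apply/orP; left; apply/existsP; exists j; apply/orP; left.
  by apply/eqP/ffunP => i; rewrite !ffunE opprK.
- apply/orP; right; apply/existsP; exists k; apply/existsP; exists j.
  by rewrite eq_sym jk; apply/eqP/ffunP => i; rewrite !ffunE opprB.
Qed.

Lemma pdif_decr (n : nat) (M : mono n.+1) (j k : 'I_n.+1) :
  (0 < M j)%N -> (0 < M k)%N ->
  pdif (pt_of (decr M j)) (pt_of (decr M k)) =
  [ffun i => (lift ord0 i == k)%:Z - (lift ord0 i == j)%:Z].
Proof.
move=> Mj_gt0 Mk_gt0; apply/ffunP => i; rewrite /decr !ffunE.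
set x := lift ord0 i; have [xj|_] := eqVneq x j; have [xk|_] := eqVneq x k => /=.
- by rewrite subrr.
- rewrite xj; case: (M j) Mj_gt0 => //= t _.
  by rewrite -addn1 PoszD opprD addrA subrr.
- rewrite xk; case: (M k) Mk_gt0 => //= t _.
  by rewrite -addn1 PoszD addrAC subrr add0r subr0.
- by rewrite !subrr.
Qed.

Lemma pdif_neq (n : nat) (m m' : pt n) (i : 'I_n) : pdif m m' i != 0 -> m != m'.
Proof. by apply: contraNN => /eqP ->; rewrite ffunE subrr. Qed.

Lemma adjacent_decr (n : nat) (M : mono n.+1) (j k : 'I_n.+1) :
  j != k -> (0 < M j)%N -> (0 < M k)%N ->
  adjacent (pt_of (decr M j)) (pt_of (decr M k)).
Proof.
move=> jk Mj_gt0 Mk_gt0; rewrite /adjacent pdif_decr //.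
have lift_neq0 (t : 'I_n) : (lift ord0 t == ord0) = false.
  by apply/negbTE; rewrite eq_sym neq_lift.
case: (unliftP ord0 j) => [j' ej|ej]; case: (unliftP ord0 k) => [k' ek|ek].
- have jk' : j' != k' by apply: contraNN jk => /eqP e; rewrite ej ek e.
  apply/andP; split.
    apply: (@pdif_neq _ _ _ k'); rewrite pdif_decr // ffunE ej ek eqxx.
    by rewrite (inj_eq lift_inj) [k' == j']eq_sym (negbTE jk').
  apply/orP; right; apply/existsP; exists k'; apply/existsP; exists j'.
  rewrite eq_sym jk'; apply/eqP/ffunP => i.
  by rewrite !ffunE ej ek !(inj_eq lift_inj).
- apply/andP; split.
    by apply: (@pdif_neq _ _ _ j'); rewrite pdif_decr // ffunE ej ek eqxx lift_neq0.
  apply/orP; left; apply/existsP; exists j'; apply/orP; right.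
  by apply/eqP/ffunP => i; rewrite !ffunE ej ek (inj_eq lift_inj) lift_neq0 sub0r.
- apply/andP; split.
    by apply: (@pdif_neq _ _ _ k'); rewrite pdif_decr // ffunE ej ek eqxx lift_neq0.
  apply/orP; left; apply/existsP; exists k'; apply/orP; left.
  by apply/eqP/ffunP => i; rewrite !ffunE ej ek (inj_eq lift_inj) lift_neq0 subr0.
- by rewrite ej ek eqxx in jk.
Qed.

Definition joined (n : nat) (K : pred (pt n)) (x y : pt n) : Prop :=
  exists s : seq (pt n), [/\ path (@adjacent n) x s, last x s = y & all K (x :: s)].

Section Joined.
Variables (n : nat) (K : pred (pt n)).

Lemma joined_refl (x : pt n) : K x -> joined K x x.
Proof. by move=> Kx; exists [::]; rewrite /= Kx. Qed.

Lemma joined_mem (x y : pt n) : joined K x y -> K x.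
Proof. by case=> s [_ _ /andP []]. Qed.

Lemma joined_step (x y z : pt n) :
  joined K x y -> K z -> adjacent y z -> joined K x z.
Proof.
move=> [s [xs_path xs_last xs_K]] Kz yz; exists (rcons s z).
by rewrite rcons_path xs_path xs_last yz last_rcons -rcons_cons all_rcons Kz xs_K.
Qed.

Lemma joined_sym (x y : pt n) : joined K x y -> joined K y x.
Proof.
case=> s; elim: s x => [|z s IH] x /= [xs_path xs_last xs_K].
  by rewrite -xs_last; apply: joined_refl; move: xs_K => /andP [].
case/andP: xs_path => xz zs_path; case/and3P: xs_K => Kx Kz zs_K.
apply: (joined_step _ Kx (adjacent_sym xz)); apply: IH.
by split => //=; rewrite Kz.
Qed.

Lemma joined_trans (x y z : pt n) :
  joined K x y -> joined K y z -> joined K x z.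
Proof.
move=> [s1 [p1 <- a1]] [s2 [p2 <- a2]]; exists (s1 ++ s2).
by rewrite cat_path p1 p2 last_cat -cat_cons all_cat a1; case/andP: a2.
Qed.

Lemma connected_of_joined (z : pt n) :
  (forall x, K x -> joined K z x) -> connected K.
Proof.
move=> joined_z x y Kx Ky.
have [s [p l /andP [_ a]]] := joined_trans (joined_sym (joined_z x Kx)) (joined_z y Ky).
by exists s.
Qed.

End Joined.

(* Multiplication by S = X_0 + ... + X_n is injective on polynomials:
   if S*f = 0 then f = 0, by descending induction on the X_0-degree, since
   the coefficient of X_0*N in S*f is f N plus terms of higher X_0-degree. *)
Lemma SQcoef_eq0 (R : realFieldType) (n D : nat) (f : mono n.+1 -> R) :
  (forall N, f N != 0 -> (mdeg N <= D)%N) ->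
  (forall M, SQcoef f M = 0) -> forall N, f N = 0.
Proof.
move=> f_deg Sf0.
suff f0_above t : forall N : mono n.+1, (D < N ord0 + t)%N -> f N = 0.
  by move=> N; apply: (f0_above D.+1); rewrite addnS ltnS leq_addl.
elim: t => [|t IH] N hN.
  apply/eqP; apply: contraTT hN => /f_deg deg_le.
  by rewrite addn0 -leqNgt (leq_trans (le_mdeg N ord0)).
pose M : mono n.+1 := [ffun i => if i == ord0 then (N i).+1 else N i].
have decrM0 : decr M ord0 = N by apply/ffunP => i; rewrite !ffunE; case: eqP => [->|].
have := Sf0 M; rewrite /SQcoef (bigD1 ord0) /= ?ffunE ?eqxx // decrM0 big1 ?addr0 //.
move=> j /andP [_ j0]; apply: IH.
by rewrite !ffunE eq_sym (negbTE j0) eqxx addSnnS.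
Qed.

Definition incb (n d : nat) (j : 'I_n) (b : {ffun 'I_n -> 'I_d.+1}) :
  {ffun 'I_n -> 'I_d.+1} := [ffun i => if i == j then inord (b i).+1 else b i].
Definition decb (n d : nat) (j : 'I_n) (b : {ffun 'I_n -> 'I_d.+1}) :
  {ffun 'I_n -> 'I_d.+1} := [ffun i => if i == j then inord (b i).-1 else b i].

Lemma incb_j (n d : nat) (j : 'I_n) (b : {ffun 'I_n -> 'I_d.+1}) :
  nat_of_ord (incb j b j) = if (b j < d)%N then (b j).+1 else 0%N.
Proof. by rewrite ffunE eqxx /inord val_insubd ltnS. Qed.

Lemma decb_incb (n d : nat) (j : 'I_n) (b : {ffun 'I_n -> 'I_d.+1}) :
  (b j < d)%N -> decb j (incb j b) = b.
Proof.
move=> bj_lt; apply/ffunP => i; rewrite ffunE; case: eqP => [->|/eqP ij].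
  by apply: val_inj; rewrite /= /inord val_insubd incb_j bj_lt /= ltn_ord.
by rewrite ffunE (negbTE ij).
Qed.

Lemma decr_incb (n d : nat) (j : 'I_n) (b : {ffun 'I_n -> 'I_d.+1}) :
  (b j < d)%N ->
  decr [ffun i => nat_of_ord (incb j b i)] j = [ffun i => nat_of_ord (b i)].
Proof.
move=> bj_lt; apply/ffunP => i; rewrite ffunE; case: eqP => [->|/eqP ij].
  by rewrite ffunE incb_j bj_lt ffunE.
by rewrite !ffunE (negbTE ij).
Qed.

Lemma prod_incb (R : comNzRingType) (n d : nat) (x : 'I_n -> R) (j : 'I_n)
    (b : {ffun 'I_n -> 'I_d.+1}) :
  (b j < d)%N -> \prod_i x i ^+ incb j b i = x j * \prod_i x i ^+ b i.
Proof.
move=> bj_lt; rewrite (bigD1 j) //= [in RHS](bigD1 j) //= incb_j bj_lt exprS -mulrA.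
congr (_ * (_ * _)); apply: eq_bigr => i ij; by rewrite ffunE (negbTE ij).
Qed.

(* (S*G)(x) = S(x) * G(x) vanishes at any point x with sum x_i = 0; as G has
   degree < d, evaluating S*G with exponents bounded by d is exact. *)
Lemma meval_SQcoef_root (R : realFieldType) (n d : nat) (G : mono n.+1 -> R)
    (x : 'I_n.+1 -> R) :
  (forall N, G N != 0 -> (mdeg N < d)%N) -> \sum_i x i = 0 ->
  meval d (SQcoef G) x = 0.
Proof.
move=> G_deg x_root; rewrite /meval /SQcoef.
under eq_bigr => b _ do rewrite big_mkcond mulr_suml.
rewrite exchange_big /=.
transitivity (\sum_j x j * meval d G x); last by rewrite -mulr_suml x_root mul0r.
apply: eq_bigr => j _.
under eq_bigr => b _ do rewrite (fun_if (fun y => y * _)) mul0r.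
rewrite -big_mkcond /= (reindex_onto (incb j) (decb j)); last first.
  move=> b; rewrite ffunE => bj_gt0; apply/ffunP => i; rewrite !ffunE.
  case: eqP => [->|//]; apply: val_inj; rewrite /= /inord !val_insubd.
  have bj_pred : ((b j).-1 < d.+1)%N by rewrite (leq_ltn_trans (leq_pred _)).
  by rewrite bj_pred prednK // ltn_ord.
rewrite /meval mulr_sumr big_mkcond /=; apply: eq_bigr => N _.
have [Nj_lt|Nj_ge] := ltnP (N j) d.
  rewrite decb_incb // eqxx decr_incb //.
  by rewrite ffunE incb_j Nj_lt /= prod_incb // mulrCA.
rewrite ffunE incb_j [(N j < d)%N]ltnNge Nj_ge /=.
have [->|/G_deg] := eqVneq (G [ffun i => nat_of_ord (N i)]) 0; first by rewrite mul0r mulr0.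
by move=> /(leq_ltn_trans (le_mdeg _ j)); rewrite ffunE ltnNge Nj_ge.
Qed.

Section Erase.
Variables (R : realFieldType) (n d : nat) (q : mono n.+1 -> R).
Hypothesis hom : homogeneous q d.-1.

Definition erase (V : pt n -> Prop) (N : mono n.+1) : R :=
  if excluded_middle_informative (V (pt_of N)) then 0 else q N.

Definition touches (f : mono n.+1 -> R) (M : mono n.+1) : bool :=
  [exists j, (0 < M j)%N && (f (decr M j) != 0)].

Lemma erase_neq0 (V : pt n -> Prop) (N : mono n.+1) :
  erase V N != 0 -> q N != 0 /\ ~ V (pt_of N).
Proof.
by rewrite /erase; case: (excluded_middle_informative _) => [VN|nV qN]; rewrite ?eqxx.
Qed.

(* If V is closed under adjacency within the support of the Newton diagram,
   the monomials of S*q touched by the erased polynomial are the same in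
   S*q and in S*(erased q): all the monomials of q contributing to such an
   M of S*q give adjacent points, so either all or none of them are erased. *)
Lemma SQcoef_erase (V : pt n -> Prop) (M : mono n.+1) :
  (forall x y, V x -> newton_support d q y -> adjacent x y -> V y) ->
  SQcoef (erase V) M = if touches (erase V) M then SQcoef q M else 0.
Proof.
move=> V_closed; rewrite /touches; case: existsP => [[k /andP [Mk_gt0 Ek]]|untouched].
  apply: eq_bigr => j Mj_gt0; rewrite /erase.
  case: (excluded_middle_informative _) => // Vj.
  have [qk nVk] := erase_neq0 Ek.
  case: (eqVneq (q (decr M j)) 0) => [->//|qj]; case: nVk.
  case: (eqVneq j k) => [<-//|jk].
  exact: (V_closed _ _ Vj (newton_support_pt_of hom qk) (adjacent_decr jk Mj_gt0 Mk_gt0)).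
rewrite /SQcoef big1 // => j Mj_gt0; apply/eqP; apply: contraT => Ej.
by case: untouched; exists j; rewrite Mj_gt0.
Qed.

End Erase.

Section Positivity.
Variables (R : realFieldType) (n d : nat) (c : mono n -> R).
Hypotheses (n_gt0 : (0 < n)%N) (c_ge0 : forall m, 0 <= c m).

Definition S_root (i : 'I_n.+1) : R := if i == ord0 then - n%:R else 1.

Lemma S_root_lift (i : 'I_n) : S_root (lift ord0 i) = 1.
Proof. by rewrite /S_root eq_sym (negbTE (neq_lift _ _)). Qed.

Lemma S_root_sum : \sum_i S_root i = 0.
Proof.
rewrite big_ord_recl; under eq_bigr => i _ do rewrite S_root_lift.
by rewrite sumr_const card_ord /S_root eqxx addNr.
Qed.

Lemma prod_S_root (e : 'I_n.+1 -> nat) :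
  \prod_i S_root i ^+ e i = (- n%:R) ^+ e ord0.
Proof.
rewrite big_ord_recl big1 ?mulr1 => [|i _]; last by rewrite S_root_lift expr1n.
by rewrite /S_root eqxx.
Qed.

(* At the zero of S, every monomial of P not a pure power of X_0 has a
   nonnegative value, and it vanishes only if its coefficient does. *)
Lemma Pcoef_S_root (M : mono n.+1) : mdeg (split0 M) != 0%N ->
  Pcoef d c M * (- n%:R) ^+ M ord0 =
  if (M ord0 + mdeg (split0 M) == d)%N then c (split0 M) * n%:R ^+ M ord0 else 0.
Proof.
move=> M_noX0; rewrite /Pcoef; case: ifP => [/eqP degM|_]; last by rewrite mul0r.
rewrite (negbTE M_noX0) subr0 -degM addnK.
by rewrite mulrAC -exprMn mulN1r opprK mulrC.
Qed.

Lemma Pcoef_vanish (T : pred (mono n.+1)) :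
  (forall M, T M -> mdeg (split0 M) != 0%N) ->
  meval d (fun M => if T M then Pcoef d c M else 0) S_root = 0 ->
  forall M, T M -> Pcoef d c M = 0.
Proof.
move=> T_noX0 sum0 M TM.
have term_ge0 (b : {ffun 'I_n.+1 -> 'I_d.+1}) : true ->
    0 <= (if T [ffun i => nat_of_ord (b i)] then Pcoef d c [ffun i => nat_of_ord (b i)]
          else 0) * \prod_i S_root i ^+ b i.
  move=> _; case: ifP => [Tb|_]; last by rewrite mul0r.
  rewrite prod_S_root -[nat_of_ord (b ord0)](ffunE (fun i => nat_of_ord (b i))).
  rewrite Pcoef_S_root ?T_noX0 //; case: ifP => // _.
  by rewrite mulr_ge0 ?exprn_ge0 ?ler0n.
case degM: (M ord0 + mdeg (split0 M) == d)%N; last by rewrite /Pcoef degM.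
pose b : {ffun 'I_n.+1 -> 'I_d.+1} := [ffun i => inord (M i)].
have bM : [ffun i => nat_of_ord (b i)] = M.
  apply/ffunP => i; rewrite !ffunE inordK // ltnS -(eqP degM) -mdeg_split0.
  exact: le_mdeg.
have := psumr_eq0P term_ge0 sum0 (i := b) isT.
rewrite bM TM prod_S_root -[nat_of_ord (b ord0)](ffunE (fun i => nat_of_ord (b i))) bM.
rewrite Pcoef_S_root ?T_noX0 // degM => /eqP.
rewrite mulf_eq0 expf_eq0 pnatr_eq0 (gtn_eqF n_gt0) andbF orbF => /eqP c0.
by rewrite /Pcoef degM c0 mulr0 (negbTE (T_noX0 _ TM)) subr0.
Qed.

End Positivity.

Lemma has_size_from_origin (n : nat) (K : pred (pt n)) (k : int) :
  K [ffun _ => 0] -> (forall m, K m -> forall i, 0 <= m i) ->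
  (forall m, K m -> pdeg m <= k) -> (exists2 m, K m & pdeg m = k) ->
  has_size K (k + 1).
Proof.
move=> K0 K_ge0 K_le K_top; exists k, [ffun _ => 0]; split=> //.
- by move=> j; split; [exists [ffun _ => 0]; rewrite ?ffunE | move=> m /K_ge0; rewrite ffunE].
- by rewrite /pdeg big1 ?subr0 // => i _; rewrite ffunE.
Qed.

Lemma dim_gt0 (n : nat) (m : mono n) : (0 < mdeg m)%N -> (0 < n)%N.
Proof. by case: n m => // m; rewrite /mdeg big_ord0. Qed.

Section NewtonDiagram.
Variables (R : realFieldType) (n d : nat) (c : mono n -> R) (q : mono n.+1 -> R).
Hypotheses (d_gt0 : (0 < d)%N) (hom : homogeneous q d.-1).
Hypothesis PQ : forall M, Pcoef d c M = SQcoef q M.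

Local Notation K := (newton_support d q).
Local Notation origin := ([ffun _ => 0] : pt n).

(* Erasing from q the
   monomials joined to the origin leaves a polynomial G such that S*G is
   the part of P on the monomials touched by G; none of them is a pure power
   of X_0, so evaluating at the zero (-n, 1, ..., 1) of S forces S*G = 0,
   hence G = 0. *)
Lemma support_joined_origin :
  (0 < n)%N -> (forall m, 0 <= c m) -> forall m, K m -> joined K origin m.
Proof.
move=> n_gt0 c_ge0.
pose V := joined K origin; pose G := erase q V.
have V_closed x y : V x -> K y -> adjacent x y -> V y by exact: joined_step.
have G_deg N : G N != 0 -> (mdeg N < d)%N.
  by case/erase_neq0 => /(mdeg_homogeneous hom) -> _; rewrite ltn_predL.
have G_noX0 M : touches G M -> mdeg (split0 M) != 0%N.
  case/existsP => k /andP [Mk_gt0 Gk]; apply/eqP => noX0.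
  have M_lift0 i : M (lift ord0 i) = 0%N.
    by apply/eqP; rewrite -leqn0 -noX0; have := le_mdeg (split0 M) i; rewrite ffunE.
  have k0 : k = ord0 by case: (unliftP ord0 k) Mk_gt0 => [k' ->|//]; rewrite M_lift0.
  have [qk not_joined] := erase_neq0 Gk; rewrite k0 in qk not_joined.
  have origin_eq : pt_of (decr M ord0) = origin.
    by rewrite pt_of_decr0; apply/ffunP => i; rewrite !ffunE M_lift0.
  apply: not_joined; rewrite origin_eq; apply: joined_refl.
  by rewrite -origin_eq; exact: newton_support_pt_of.
have SG M : SQcoef G M = if touches G M then Pcoef d c M else 0.
  by rewrite (SQcoef_erase hom _ V_closed) PQ.
have G_eval : meval d (fun M => if touches G M then Pcoef d c M else 0) (@S_root R n) = 0.
  rewrite -[RHS](meval_SQcoef_root G_deg (S_root_sum R n)) /meval.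
  by apply: eq_bigr => b _; rewrite SG.
have SG0 M : SQcoef G M = 0.
  by rewrite SG; case: ifP => // /(Pcoef_vanish n_gt0 c_ge0 G_noX0 G_eval).
have G0 := SQcoef_eq0 (fun N GN => ltnW (G_deg N GN)) SG0.
move=> m Km; have [_ _ qm m_eq] := newton_supportP Km.
move: (G0 (Qmono d m)); rewrite /G /erase m_eq.
case: (excluded_middle_informative _) => [//|_ /= qm0].
by rewrite qm0 eqxx in qm.
Qed.

(* A monomial m0 of p of degree d gives the monomial X^m0 of P, which
   forces a point of K of total degree d - 1. *)
Lemma support_top (m0 : mono n) :
  mdeg m0 = d -> c m0 != 0 -> exists2 m, K m & pdeg m = (d.-1)%:Z.
Proof.
move=> deg_m0 c_m0.
pose M : mono n.+1 := [ffun i => if unlift ord0 i is Some j then m0 j else 0%N].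
have M0 : M ord0 = 0%N by rewrite ffunE unlift_none.
have split0M : split0 M = m0 by apply/ffunP => i; rewrite !ffunE liftK.
have : SQcoef q M != 0.
  rewrite -PQ /Pcoef M0 split0M deg_m0 add0n eqxx subnn expr0 mul1r (gtn_eqF d_gt0).
  by rewrite subr0.
have [j /andP [Mj_gt0 qj] _|all0] := pickP (fun j => (0 < M j)%N && (q (decr M j) != 0)).
  have j0 : j != ord0 by apply: contraTneq Mj_gt0 => ->; rewrite M0.
  exists (pt_of (decr M j)); first exact: newton_support_pt_of.
  rewrite pdeg_pt_of -(mdeg_homogeneous hom qj) mdeg_split0 ffunE eq_sym (negbTE j0).
  by rewrite M0.
rewrite /SQcoef big1 ?eqxx // => j Mj_gt0.
by apply/eqP; move: (all0 j); rewrite /= Mj_gt0 => /negbFE.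
Qed.

End NewtonDiagram.

Unset Implicit Arguments.

Theorem mainTheorem13 (R : realFieldType) (n d : nat)
    (c : mono n -> R) (q : mono n.+1 -> R) :
  (1 <= d)%N ->
  in_H d c ->
  homogeneous q d.-1 ->
  (forall M : mono n.+1, Pcoef d c M = SQcoef q M) ->
  connected (newton_support d q) /\
  newton_support d q [ffun _ => 0] /\
  has_size (newton_support d q) d%:Z.
Proof.
move=> d_gt0 [_ [m0 [deg_m0 c_m0]] c_ge0 _] hom PQ.
have n_gt0 : (0 < n)%N by apply: (dim_gt0 (m := m0)); rewrite deg_m0.
have joined_origin := support_joined_origin d_gt0 hom PQ n_gt0 c_ge0.
have [top K_top deg_top] := support_top d_gt0 hom PQ deg_m0 c_m0.
have K_origin := joined_mem (joined_origin top K_top).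
split; first exact: connected_of_joined joined_origin.
split=> //; rewrite -[d in d%:Z](prednK d_gt0) -addn1 PoszD.
apply: has_size_from_origin => //; last by exists top.
- by move=> m /newton_supportP [].
- by move=> m /newton_supportP [].
Qed.
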